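(* Let $\mathcal{G}$ be a hereditary class of finite graphs. Then the following statements are equivalent. (1) $\mathcal{G}$ is clique-sparse, i.e. there is a constant $k$ such that $\widetilde{\omega}(G)\le k$ and $\mathsf{cideg}(G)\le k$ for all $G\in\mathcal{G}$. (2) There is a constant $d$ such that for every graph $G\in\mathcal{G}$, the graph obtained from $G$ by successively identifying true twins has maximum degree at most $d$. (3) Both $\widetilde{\omega}$ and $\alpha^{\ast}$ are bounded on $\mathcal{G}$. (4) Both $\widetilde{\omega}$ and $\theta^{\ast}$ are bounded on $\mathcal{G}$. (5) $\mathsf{cdeg}$ is bounded on $\mathcal{G}$. (6) There is an $n$ such that no graph in $\mathcal{G}$ contains any of $\mathscr{S}_n$, $\mathscr{M}^{KI}_n$, $\mathscr{M}^{KK}_n$, $\mathscr{A}^{KK}_n$, $\mathscr{H}^{KK}_n$ as an induced subgraph (i.e. $\mathcal{G}$ excludes a star, a split matching, a matching between two cliques, an anti-matching between two cliques, and a half-graph between two cliques as induced subgraphs).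
   Context: All graphs are finite and simple; a class is hereditary if it is closed under taking induced subgraphs. Two vertices are true twins if they have the same closed neighbourhood; identifying true twins means replacing them by a single vertex with that neighbourhood. Two vertices are equivalent if they lie in exactly the same maximal cliques. $\widetilde{\omega}(G)$ is the maximum over maximal cliques $K$ of the number of equivalence classes meeting $K$; $\mathsf{cideg}(G)$ is the maximum over vertices $v$ of the number of maximal cliques containing $v$; $\mathsf{cdeg}(G)$ is the maximum over maximal cliques $K$ of the number of other maximal cliques intersecting $K$. $\alpha^{\ast}(G)=\max_v \alpha(G[N[v]])$ and $\theta^{\ast}(G)=\max_v\theta(G[N[v]])$, where $\theta$ is the clique-cover number. A parameter is bounded on $\mathcal{G}$ if some constant bounds it on all members. For ordered sets $X=\{x_1,\dots,x_n\}$, $Y=\{y_1,\dots,y_n\}$ and a vertex $c$: $\mathscr{S}_n$ is the star with centre $c$ and leaves $X$; $\mathscr{M}^{KI}_n$ has edges $x_iy_i$ ($i\in[n]$) and $X$ a clique ($Y$ independent); $\mathscr{M}^{KK}_n$ has edges $x_iy_i$ and both $X$ and $Y$ cliques; $\mathscr{A}^{KK}_n$ has edges $x_iy_j$ for $i\neq j$ and both $X,Y$ cliques; $\mathscr{H}^{KK}_n$ has edges $x_iy_j$ for $i\le j$ and both $X,Y$ cliques. *)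

From HB Require Import structures.
From mathcomp Require Import all_boot.

Set Implicit Arguments.
Unset Strict Implicit.
Unset Printing Implicit Defensive.

Record sgraph := SGraph {
  vert : finType;
  adj : rel vert;
  adj_sym : symmetric adj;
  adj_irr : irreflexive adj }.

Definition induced_sub (H G : sgraph) : Prop :=
  exists f : vert H -> vert G,
    injective f /\ forall x y, @adj G (f x) (f y) = @adj H x y.

Definition hereditary (C : sgraph -> Prop) : Prop :=
  forall G H : sgraph, C G -> induced_sub H G -> C H.

Section Params.
Variable G : sgraph.
Local Notation V := (vert G).

Definition clique (K : {set V}) : bool :=
  [forall x in K, forall y in K, (x != y) ==> @adj G x y].

Definition maxcl (K : {set V}) : bool :=
  clique K && [forall K' : {set V}, (clique K' && (K \subset K')) ==> (K' == K)].

Definition eqcl (v : V) : {set V} :=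
  [set w | [forall K : {set V}, maxcl K ==> ((v \in K) == (w \in K))]].

Definition omt : nat :=
  \max_(K : {set V} | maxcl K) #|[set eqcl v | v in K]|.

Definition cideg : nat :=
  \max_(v : V) #|[set K : {set V} | maxcl K && (v \in K)]|.

Definition cdeg : nat :=
  \max_(K : {set V} | maxcl K)
     #|[set K' : {set V} | [&& maxcl K', K' != K & K :&: K' != set0]]|.

Definition indep (A : {set V}) : bool :=
  [forall x in A, forall y in A, ~~ @adj G x y].

Definition cnbhd (v : V) : {set V} := v |: [set w | @adj G v w].

Definition alpha_in (S : {set V}) : nat :=
  \max_(A : {set V} | (A \subset S) && indep A) #|A|.

Definition alphastar : nat := \max_(v : V) alpha_in (cnbhd v).

Definition cc_cover (S : {set V}) (k : nat) : bool :=
  [exists P : {set {set V}},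
     [&& #|P| <= k, [forall K in P, clique K && (K \subset S)]
       & \bigcup_(K in P) K == S]].

Lemma cc_cover_ex (S : {set V}) : exists k, cc_cover S k.
Proof.
exists #|[set [set x] | x in S]|.
apply/existsP; exists [set [set x] | x in S]; rewrite leqnn /=.
apply/andP; split.
  apply/forallP => K; apply/implyP => /imsetP [x xS ->].
  apply/andP; split; last by rewrite sub1set.
  apply/forallP => a; apply/implyP => /set1P ->.
  by apply/forallP => b; apply/implyP => /set1P ->; rewrite eqxx.
apply/eqP/setP => y; apply/bigcupP/idP.
  by case=> K /imsetP [x xS ->] /set1P ->.
move=> yS; exists [set y]; first exact: imset_f.
exact: set11.
Qed.

Definition theta_in (S : {set V}) : nat := ex_minn (cc_cover_ex S).

Definition thetastar : nat := \max_(v : V) theta_in (cnbhd v).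

Definition tw (v : V) : {set V} := [set w | cnbhd w == cnbhd v].

(* Vertices of the graph obtained by successively identifying true twins:
   the true-twin classes; two classes adjacent iff distinct and some
   representatives are adjacent. *)
Definition twin_classes : {set {set V}} := [set tw v | v : V].

Definition tq_adj (A B : {set V}) : bool :=
  (A != B) && [exists a in A, exists b in B, @adj G a b].

Definition twin_reduced_maxdeg_le (d : nat) : Prop :=
  forall A, A \in twin_classes ->
    #|[set B in twin_classes | tq_adj A B]| <= d.

End Params.

Definition srel (T : finType) (r : rel T) : rel T :=
  fun x y => (x != y) && (r x y || r y x).

Lemma srel_sym (T : finType) (r : rel T) : symmetric (srel r).
Proof. by move=> x y; rewrite /srel eq_sym orbC. Qed.

Lemma srel_irr (T : finType) (r : rel T) : irreflexive (srel r).
Proof. by move=> x; rewrite /srel eqxx. Qed.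

Definition mkG (T : finType) (r : rel T) : sgraph :=
  @SGraph T (srel r) (@srel_sym T r) (@srel_irr T r).

Definition star (n : nat) : sgraph :=
  @mkG (option 'I_n) (fun u v => (u == None) && (v != None)).

(* Two-part graphs on X = inl, Y = inr *)
Definition MKI (n : nat) : sgraph :=
  @mkG ('I_n + 'I_n)%type (fun u v =>
    match u, v with
    | inl i, inr j => i == j
    | inl _, inl _ => true
    | _, _ => false
    end).

Definition MKK (n : nat) : sgraph :=
  @mkG ('I_n + 'I_n)%type (fun u v =>
    match u, v with
    | inl i, inr j => i == j
    | inl _, inl _ => true
    | inr _, inr _ => true
    | _, _ => false
    end).

Definition AKK (n : nat) : sgraph :=
  @mkG ('I_n + 'I_n)%type (fun u v =>
    match u, v with
    | inl i, inr j => i != j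
    | inl _, inl _ => true
    | inr _, inr _ => true
    | _, _ => false
    end).

Definition HKK (n : nat) : sgraph :=
  @mkG ('I_n + 'I_n)%type (fun u v =>
    match u, v with
    | inl i, inr j => (i <= j)%N
    | inl _, inl _ => true
    | inr _, inr _ => true
    | _, _ => false
    end).

(* (5) => (1): a vertex of a maximal clique [K] lies only in [K] and in cliques
   meeting [K], and two vertices of [K] lying in the same cliques meeting [K]
   are equivalent, so [cideg <= cdeg + 1] and [omt <= 2 ^ cdeg].
   (1) => (4) => (3): [N[v]] is covered by the maximal cliques through [v], and
   [alpha <= theta].
   (3) => (6): in the two-clique obstructions the clique [X] consists of
   pairwise inequivalent vertices, so [omt >= n]; the star has [alpha* = n].
   (2) => (5): a maximal clique is a union of twin classes, all within
   distance one of any of them in the twin-reduced graph; so a clique meeting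
   it is determined by a subset of the at most [(d+1)^2] classes within
   distance one of it.
   (6) => (2): if a twin class has many neighbours, Ramsey's theorem in the
   neighbourhood of a representative gives a star or a huge clique [Q] of
   pairwise non-twins.  Repeatedly splitting [Q] by a vertex outside [Q] that
   separates two of its members yields [x_t] in [Q] and [z_t] outside [Q] such
   that the adjacency of [x_t'] and [z_t] is the same for all [t' > t] and
   opposite for [t' = t].  Two more applications of Ramsey's theorem extract a
   staircase: [x_i z_j] adjacent according to [i < j], [i = j] or [i > j] only,
   and [Z] a clique or independent; each of the eight staircases contains one
   of the five obstructions. *)

From mathcomp Require Import all_boot zify.

Set Implicit Arguments.
Unset Strict Implicit.
Unset Printing Implicit Defensive.

Lemma leq_cardsU1 (T : finType) (a : T) (A : {set T}) : #|a |: A| <= #|A|.+1.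
Proof. by rewrite cardsU1; case: (a \notin A). Qed.

Lemma widen_ord_inj m n (le_mn : m <= n) : injective (widen_ord le_mn).
Proof. by move=> i j /(congr1 (@nat_of_ord n)) /= /ord_inj. Qed.

Lemma leq_card_bigcup (I T : finType) (P : {set I}) (F : I -> {set T}) :
  #|\bigcup_(i in P) F i| <= \sum_(i in P) #|F i|.
Proof.
apply: (big_rec2 (fun (S : {set T}) n => #|S| <= n)); first by rewrite cards0.
by move=> i S n _ le_Sn; rewrite (leq_trans (leq_card_setU _ _)) ?leq_add2l.
Qed.

Lemma leq_imset_card_factor (T U W : finType) (f : T -> U) (g : T -> W)
    (D : {set T}) :
  {in D &, forall x y, g x = g y -> f x = f y} -> #|f @: D| <= #|g @: D|.
Proof.
move=> gf; have [->|[x0 _]] := set_0Vmem D; first by rewrite !imset0 cards0.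
pose h w := f (odflt x0 [pick x in D | g x == w]).
apply: leq_trans (leq_imset_card h _); apply/subset_leq_card/subsetP.
move=> _ /imsetP[x xD ->]; apply/imsetP; exists (g x); first exact: imset_f.
rewrite /h; case: pickP => [y /andP[yD /eqP gyx] /=|/(_ x)]; last by rewrite xD eqxx.
exact: gf.
Qed.

Section Cliques.
Variable G : sgraph.
Local Notation V := (vert G).
Local Notation adj := (@adj G).

Lemma cliqueP (K : {set V}) :
  reflect {in K &, forall x y, x != y -> adj x y} (clique K).
Proof.
apply: (iffP forallP) => [cK x y xK yK | cK x].
  by move/implyP/(_ xK)/forallP/(_ y)/implyP/(_ yK)/implyP: (cK x).
by apply/implyP=> xK; apply/forallP=> y; apply/implyP=> yK; apply/implyP; apply: cK.
Qed.

Lemma maxclP (K : {set V}) :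
  reflect (clique K /\ forall K', clique K' -> K \subset K' -> K' = K) (maxcl K).
Proof.
apply: (iffP andP) => [[cK /forallP maxK]|[cK maxK]]; split=> //.
  by move=> K' cK' sKK'; apply/eqP; move: (maxK K'); rewrite cK' sKK'.
by apply/forallP => K'; apply/implyP => /andP[cK' /(maxK K' cK') ->].
Qed.

Lemma maxcl_clique (K : {set V}) : maxcl K -> clique K.
Proof. by case/maxclP. Qed.

Lemma maxcl_adj (K : {set V}) x y :
  maxcl K -> x \in K -> y \in K -> x != y -> adj x y.
Proof. by move/maxcl_clique/cliqueP; apply. Qed.

Lemma clique_sub_maxcl (K : {set V}) :
  clique K -> exists2 K', maxcl K' & K \subset K'.
Proof.
case/(maxset_exists (P := @clique G)) => K' /maxsetP[cK' maxK'] sKK'.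
by exists K' => //; apply/maxclP.
Qed.

Lemma clique_set2 (x y : V) : x \in cnbhd y -> clique [set x; y].
Proof.
rewrite !inE => xy; apply/cliqueP => u w.
rewrite !inE => /orP[]/eqP-> /orP[]/eqP->; rewrite ?eqxx // => ne.
  by case/orP: xy ne => [/eqP->|]; rewrite ?eqxx // adj_sym.
by case/orP: xy ne => [/eqP->|]; rewrite ?eqxx.
Qed.

Definition maxcl_at (v : V) := [set K : {set V} | maxcl K && (v \in K)].

Lemma clique_sub_cnbhd (K : {set V}) v : clique K -> v \in K -> K \subset cnbhd v.
Proof.
move=> cK vK; apply/subsetP => w wK; rewrite !inE.
by case: eqP => //= /eqP wv; apply: (cliqueP _ cK) => //; rewrite eq_sym.
Qed.

Lemma cnbhd_bigcup (v : V) : cnbhd v = \bigcup_(K in maxcl_at v) K.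
Proof.
apply/setP => w; apply/idP/bigcupP => [wv|[K]]; last first.
  by rewrite inE => /andP[mK vK]; apply/subsetP/clique_sub_cnbhd/vK/maxcl_clique.
have [K mK /subsetP sK] := clique_sub_maxcl (clique_set2 wv).
by exists K; rewrite ?inE ?mK sK // !inE eqxx ?orbT.
Qed.

Lemma maxcl_twin (K : {set V}) x y :
  maxcl K -> x \in K -> cnbhd y = cnbhd x -> y \in K.
Proof.
move=> mK xK yx; have /maxclP[cK maxK] := mK.
have sKy : K \subset cnbhd y by rewrite yx clique_sub_cnbhd.
suff cyK : clique (y |: K) by rewrite -(maxK _ cyK (subsetUr _ _)) setU11.
apply/cliqueP => a b; rewrite !inE => /orP[/eqP->|aK] /orP[/eqP->|bK];
  rewrite ?eqxx // => ne.
- by move: (subsetP sKy b bK); rewrite !inE eq_sym (negbTE ne).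
- by move: (subsetP sKy a aK); rewrite !inE (negbTE ne) adj_sym.
- exact: (cliqueP _ cK).
Qed.

Lemma mem_tw (x : V) : x \in tw x. Proof. by rewrite inE. Qed.

Lemma tw_cnbhd (x y : V) : y \in tw x -> cnbhd y = cnbhd x.
Proof. by rewrite inE => /eqP. Qed.

Lemma tw_eq (x y : V) : y \in tw x -> tw y = tw x.
Proof. by move/tw_cnbhd => yx; apply/setP => z; rewrite !inE yx. Qed.

Lemma tw_twin_classes (x : V) : tw x \in twin_classes G.
Proof. exact: imset_f. Qed.

Lemma tq_adj_tw (x y : V) : tw x != tw y -> adj x y -> tq_adj (tw x) (tw y).
Proof.
move=> ne xy; rewrite /tq_adj ne; apply/existsP; exists x; rewrite mem_tw.
by apply/existsP; exists y; rewrite mem_tw.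
Qed.

End Cliques.

Section UpperBounds.
Variable G : sgraph.
Local Notation V := (vert G).

Definition maxcl_nbrs (K : {set V}) :=
  [set K' : {set V} | [&& maxcl K', K' != K & K :&: K' != set0]].

Lemma leq_cdeg (K : {set V}) : maxcl K -> #|maxcl_nbrs K| <= cdeg G.
Proof.
by move=> mK; apply: (@leq_bigmax_cond _ (@maxcl G) (fun K => #|maxcl_nbrs K|)).
Qed.

Lemma leq_cideg (v : V) : #|maxcl_at v| <= cideg G.
Proof. exact: (@leq_bigmax _ (fun v => #|maxcl_at v|)). Qed.

Lemma cideg_le_cdeg : cideg G <= (cdeg G).+1.
Proof.
apply/bigmax_leqP => v _; rewrite -/(maxcl_at v).
have [->|[K0]] := set_0Vmem (maxcl_at v); first by rewrite cards0.
rewrite inE => /andP[mK0 vK0]; apply: (@leq_trans #|K0 |: maxcl_nbrs K0|).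
  apply/subset_leq_card/subsetP => K; rewrite !inE => /andP[mK vK].
  case: eqP => //= _; rewrite mK; apply/set0Pn.
  by exists v; rewrite inE vK0.
by rewrite (leq_trans (leq_cardsU1 _ _)) // ltnS leq_cdeg.
Qed.

Lemma omt_le_cdeg : omt G <= 2 ^ cdeg G.
Proof.
apply/bigmax_leqP => K mK.
pose g v := [set K' in maxcl_nbrs K | v \in K'].
have same_maxcl v w : v \in K -> w \in K -> g v = g w ->
    forall K', maxcl K' -> (v \in K') = (w \in K').
  move=> vK wK gvw K' mK'; have [->|ne] := eqVneq K' K; first by rewrite vK wK.
  have [dis|meet] := eqVneq (K :&: K') set0.
    by move: (in_set0 v) (in_set0 w); rewrite -dis !inE vK wK /= => -> ->.
  by move: (congr1 (fun S : {set {set V}} => K' \in S) gvw); rewrite !inE mK' ne meet.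
apply: leq_trans (leq_imset_card_factor (g := g) _) _.
  move=> v w vK wK gvw; apply/setP => u; rewrite !inE; apply: eq_forallb => K'.
  by case mK': (maxcl K'); rewrite //= (same_maxcl v w).
apply: (@leq_trans #|powerset (maxcl_nbrs K)|).
  apply/subset_leq_card/subsetP => _ /imsetP[v _ ->].
  by rewrite powersetE; apply/subsetP => K'; rewrite inE => /andP[].
by rewrite card_powerset leq_pexp2l // leq_cdeg.
Qed.

Lemma thetastar_le_cideg : thetastar G <= cideg G.
Proof.
apply/bigmax_leqP => v _; apply: leq_trans (leq_cideg v).
rewrite /theta_in; case: ex_minnP => m _; apply.
apply/existsP; exists (maxcl_at v); rewrite leqnn -cnbhd_bigcup eqxx andbT.
apply/forallP => K; apply/implyP; rewrite inE => /andP[mK vK].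
by rewrite maxcl_clique ?clique_sub_cnbhd ?maxcl_clique.
Qed.

Definition tq_nbhd (A : {set V}) := [set B in twin_classes G | tq_adj A B].
Definition tw_classes (K : {set V}) := [set tw x | x in K].

Lemma maxcl_bigcup_tw_classes (K : {set V}) :
  maxcl K -> K = \bigcup_(B in tw_classes K) B.
Proof.
move=> mK; apply/setP => x; apply/idP/bigcupP => [xK|[_ /imsetP[y yK ->] xy]].
  by exists (tw x); [exact: imset_f | exact: mem_tw].
exact: maxcl_twin mK yK (tw_cnbhd xy).
Qed.

Lemma tw_classes_sub (K : {set V}) k :
  maxcl K -> k \in K -> tw_classes K \subset tw k |: tq_nbhd (tw k).
Proof.
move=> mK kK; apply/subsetP => _ /imsetP[x xK ->]; rewrite in_setU1 inE.
have [->//|ne] := eqVneq (tw k) (tw x).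
rewrite tw_twin_classes tq_adj_tw ?orbT //; apply: maxcl_adj mK kK xK _.
by apply: contraNneq ne => ->.
Qed.

Lemma cdeg_le_twin d : twin_reduced_maxdeg_le G d -> cdeg G <= 2 ^ (d.+1 * d.+1).
Proof.
move=> degG; have nbhd_le k : #|tw k |: tq_nbhd (tw k)| <= d.+1.
  by rewrite (leq_trans (leq_cardsU1 _ _)) // ltnS degG ?tw_twin_classes.
apply/bigmax_leqP => K mK; rewrite -/(maxcl_nbrs K).
have [K0|[k0 k0K]] := set_0Vmem K.
  rewrite (_ : maxcl_nbrs K = set0) ?cards0 //; apply/setP => K'.
  by rewrite !inE K0 set0I eqxx !andbF.
pose U := \bigcup_(B in tw_classes K) (B |: tq_nbhd B).
have cardU : #|U| <= d.+1 * d.+1.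
  apply: leq_trans (leq_card_bigcup _ _) _.
  apply: (@leq_trans (\sum_(B in tw_classes K) d.+1)).
    by apply: leq_sum => _ /imsetP[k _ ->]; exact: nbhd_le.
  rewrite sum_nat_const leq_mul2r.
  by rewrite (leq_trans (subset_leq_card (tw_classes_sub mK k0K))) ?nbhd_le ?orbT.
apply: (@leq_trans #|tw_classes @: maxcl_nbrs K|).
  rewrite card_in_imset // => K1 K2; rewrite !inE => /andP[m1 _] /andP[m2 _] e.
  by rewrite (maxcl_bigcup_tw_classes m1) (maxcl_bigcup_tw_classes m2) e.
apply: (@leq_trans #|powerset U|); last by rewrite card_powerset leq_pexp2l.
apply/subset_leq_card/subsetP => _ /imsetP[K' + ->].
rewrite inE => /and3P[mK' _ /set0Pn[k]]; rewrite inE => /andP[kK kK'].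
rewrite powersetE (subset_trans (tw_classes_sub mK' kK')) //.
by apply: (bigcup_sup (tw k)); apply: imset_f.
Qed.

End UpperBounds.

Section LowerBounds.
Variable G : sgraph.
Local Notation V := (vert G).
Local Notation adj := (@adj G).

Lemma indepP (A : {set V}) : reflect {in A &, forall x y, ~~ adj x y} (indep A).
Proof.
apply: (iffP forallP) => [indA x y xA yA | indA x].
  by move/implyP/(_ xA)/forallP/(_ y)/implyP/(_ yA): (indA x).
by apply/implyP => xA; apply/forallP => y; apply/implyP; apply: indA.
Qed.

Lemma alpha_in_le_theta_in (S : {set V}) : alpha_in S <= theta_in S.
Proof.
apply/bigmax_leqP => A /andP[sAS /indepP indA].
rewrite /theta_in; case: ex_minnP => m /existsP[P] /and3P[cardP /forall_inP cP].
move=> /eqP coverP _.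
pose pk a := odflt set0 [pick K in P | a \in K].
have pkP a : a \in A -> pk a \in P /\ a \in pk a.
  move=> aA; move: (subsetP sAS a aA); rewrite -coverP => /bigcupP[K KP aK].
  by rewrite /pk; case: pickP => [K' /andP[]|/(_ K)] //; rewrite KP aK.
have pk_inj : {in A &, injective pk}.
  move=> a b aA bA pkab; apply/eqP; apply: contraT => ne.
  have [KP aK] := pkP a aA; have [_] := pkP b bA; rewrite -pkab => bK.
  have /andP[/cliqueP cK _] := cP _ KP.
  by have := indA a b aA bA; rewrite (cK a b aK bK ne).
rewrite -(card_in_imset pk_inj) (leq_trans _ cardP) //.
by apply/subset_leq_card/subsetP => _ /imsetP[a aA ->]; case: (pkP a aA).
Qed.

Lemma alphastar_le_thetastar : alphastar G <= thetastar G.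
Proof.
apply/bigmax_leqP => v _; apply: leq_trans (alpha_in_le_theta_in _) _.
exact: (@leq_bigmax _ (fun v => theta_in (cnbhd v))).
Qed.

Lemma eqcl_neq (x y z : V) :
  adj x z != adj y z -> z != x -> z != y -> eqcl x != eqcl y.
Proof.
wlog xz : x y / adj x z.
  move=> W ne zx zy; case xz: (adj x z); first exact: W.
  have yz : adj y z by move: ne; rewrite xz; case: (adj y z).
  by rewrite eq_sym; apply: W => //; rewrite xz yz.
rewrite xz => /negbTE yz zx zy.
have /bigcupP[K] : z \in \bigcup_(K in maxcl_at x) K.
  by rewrite -cnbhd_bigcup !inE xz orbT.
rewrite inE => /andP[mK xK] zK.
have yK : y \notin K.
  by apply: contraFN yz => yK; apply: maxcl_adj mK yK zK _; rewrite eq_sym.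
apply/eqP => exy; have : y \in eqcl x.
  by rewrite exy inE; apply/forallP => K'; apply/implyP.
by rewrite inE => /forallP/(_ K); rewrite mK xK eq_sym (negbTE yK).
Qed.

Lemma omt_ge_clique (X : {set V}) :
  clique X -> {in X &, injective (@eqcl G)} -> #|X| <= omt G.
Proof.
move=> cX eq_inj; have [K mK sXK] := clique_sub_maxcl cX.
rewrite -(card_in_imset eq_inj) (leq_trans (subset_leq_card (imsetS _ sXK))) //.
exact: (@leq_bigmax_cond _ (@maxcl G) (fun K => #|[set eqcl v | v in K]|)).
Qed.

End LowerBounds.

Lemma omt_ge_left_clique n (R : rel ('I_n + 'I_n)) :
  (forall i j, R (inl i) (inl j)) -> (forall i k, R (inr k) (inl i) = false) ->
  (forall i j, i != j -> exists k, R (inl i) (inr k) != R (inl j) (inr k)) ->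
  n <= omt (mkG R).
Proof.
move=> RX RYX sep; pose X : {set vert (mkG R)} := [set inl i | i : 'I_n].
have {1}<- : #|X| = n by rewrite card_imset ?card_ord // => i j [].
apply: omt_ge_clique.
  by apply/cliqueP => _ _ /imsetP[i _ ->] /imsetP[j _ ->] ne; rewrite /= /srel ne RX.
move=> _ _ /imsetP[i _ ->] /imsetP[j _ ->] eqij; congr inl; apply/eqP.
apply: contraT => ne; have [k Rk] := sep i j ne.
have := @eqcl_neq (mkG R) (inl i) (inl j) (inr k).
by rewrite eqij eqxx /= /srel !RYX !orbF; apply.
Qed.

Lemma omt_MKI n : n <= omt (MKI n).
Proof.
apply: omt_ge_left_clique => // i j ne.
by exists i; rewrite eqxx (eq_sym j) (negbTE ne).
Qed.

Lemma omt_MKK n : n <= omt (MKK n).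
Proof.
apply: omt_ge_left_clique => // i j ne.
by exists i; rewrite eqxx (eq_sym j) (negbTE ne).
Qed.

Lemma omt_AKK n : n <= omt (AKK n).
Proof.
apply: omt_ge_left_clique => // i j ne.
by exists i; rewrite eqxx (eq_sym j) (negbTE ne).
Qed.

Lemma omt_HKK n : n <= omt (HKK n).
Proof.
apply: omt_ge_left_clique => // i j ne.
case: (ltngtP i j) => [ij|ji|/val_inj eij]; last by rewrite eij eqxx in ne.
  by exists i; rewrite leqnn leqNgt ij.
by exists j; rewrite leqnn leqNgt ji.
Qed.

Lemma alphastar_star n : n <= alphastar (star n).
Proof.
pose L : {set vert (star n)} := [set Some i | i : 'I_n].
have {1}<- : #|L| = n by rewrite card_imset ?card_ord // => i j [].
apply: (leq_trans _ (@leq_bigmax (vert (star n)) (fun v => alpha_in (cnbhd v)) None)).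
rewrite /alpha_in; apply: leq_bigmax_cond.
apply/andP; split; first by apply/subsetP => _ /imsetP[i _ ->]; rewrite !inE.
by apply/indepP => _ _ /imsetP[i _ ->] /imsetP[j _ ->]; rewrite /= /srel andbF.
Qed.

Lemma bool_pigeonhole (T : finType) (f : T -> bool) (S : {set T}) m :
  m + m <= #|S|.+1 -> exists b, m <= #|[set x in S | f x == b]|.
Proof.
move=> cardS.
have : #|[set x in S | f x == true]| + #|[set x in S | f x == false]| = #|S|.
  rewrite -(cardsID [set x | f x] S); congr (_ + _); apply: eq_card => x; rewrite !inE.
    by rewrite eqb_id.
  by rewrite eqbF_neg andbC.
case: (leqP m #|[set x in S | f x == true]|) => [|lt cardE]; first by exists true.
by exists false; lia.
Qed.

Definition ramsey_bound (a : nat) := 2 ^ (a + a).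

Lemma ramsey (T : finType) (r : rel T) : symmetric r ->
  forall (m : bool -> nat) (S : {set T}), 2 ^ (m true + m false) <= #|S| ->
  exists c (A : {set T}),
    [/\ A \subset S, m c <= #|A| & {in A &, forall x y, x != y -> r x y = c}].
Proof.
move=> r_sym m S; move Ek: (m true + m false) => k.
elim: k => [|k IH] in m S Ek * => cardS.
all: have [c /eqP mc0|m_pos] := pickP (fun c => m c == 0);
  first by exists c, set0; rewrite sub0set mc0; split=> // x; rewrite inE.
all: have mpos c : 0 < m c by rewrite lt0n m_pos.
  by have := mpos true; have := mpos false; lia.
have [v vS] : exists v, v \in S.
  by apply/card_gt0P; apply: leq_trans cardS; rewrite expn_gt0.
pose N b := [set x in S :\ v | r v x == b].
have [b cardN] : exists b, 2 ^ k <= #|N b|.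
  by apply: bool_pigeonhole; move: cardS; rewrite (cardsD1 v S) vS expnS; lia.
pose m' c := m c - (c == b).
have Ek' : m' true + m' false = k by rewrite /m'; have := mpos b; case: (b) => /=; lia.
have [c [A [sAN cardA homA]]] := IH m' (N b) Ek' cardN.
have sAS : A \subset S :\ v.
  by apply: subset_trans sAN _; apply/subsetP => x; rewrite inE => /andP[].
have [cb|ncb] := eqVneq c b; last first.
  exists c, A; split=> //; first exact: subset_trans sAS (subD1set _ _).
  by move: cardA; rewrite /m' (negbTE ncb) subn0.
have vA : v \notin A by apply/negP => /(subsetP sAS); rewrite !inE eqxx.
have vAb x : x \in A -> r v x = b by move/(subsetP sAN); rewrite inE => /andP[_ /eqP].
exists b, (v |: A); split.
- by rewrite subUset sub1set vS (subset_trans sAS) ?subD1set.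
- by rewrite cardsU1 vA; move: cardA; rewrite /m' cb eqxx /=; lia.
- move=> x y; rewrite !inE => /predU1P[->|xA] /predU1P[->|yA]; rewrite ?eqxx // => ne.
  + exact: vAb.
  + by rewrite r_sym vAb.
  + by rewrite -cb homA.
Qed.

(* Split [F] by adjacency to a vertex separating two of its members, recurse
   into the larger half, and prepend the separated vertex lying in the other. *)
Lemma separating_sequence (T : finType) (r : rel T) (Q : {set T}) :
  {in Q &, forall q q', q != q' -> exists2 z, z \notin Q & r q z != r q' z} ->
  forall L (F : {set T}), F \subset Q -> 2 ^ L <= #|F| ->
  exists (x z : nat -> T) (d : nat -> bool), forall t, t < L ->
    [/\ x t \in F, z t \notin Q, r (x t) (z t) = ~~ d t &
        forall t', t < t' < L -> r (x t') (z t) = d t].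
Proof.
move=> sep; elim=> [|L IH] F sFQ cardF.
  have [y0 _] : exists y, y \in F by apply/card_gt0P.
  by exists (fun=> y0), (fun=> y0), (fun=> true).
have [q [q' [qF q'F nqq]]] : exists q q', [/\ q \in F, q' \in F & q != q'].
  by apply/card_gt1P; apply: leq_trans cardF; rewrite expnS; have := expn_gt0 2 L; lia.
have [z0 z0Q rz0] := sep q q' (subsetP sFQ q qF) (subsetP sFQ q' q'F) nqq.
pose Fb b := [set y in F | r y z0 == b].
have [b cardFb] : exists b, 2 ^ L <= #|Fb b|.
  by apply: bool_pigeonhole; move: cardF; rewrite expnS; lia.
have [x0 x0F rx0] : exists2 x0, x0 \in F & r x0 z0 = ~~ b.
  have [rq|rq] := eqVneq (r q z0) (~~ b); first by exists q.
  by exists q'; move: rz0 rq; case: (r q z0); case: (r q' z0); case: (b).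
have sFbQ : Fb b \subset Q.
  by apply: subset_trans sFQ; apply/subsetP => y; rewrite inE => /andP[].
have [x [z [d seqP]]] := IH _ sFbQ cardFb.
exists (fun t => if t is s.+1 then x s else x0).
exists (fun t => if t is s.+1 then z s else z0).
exists (fun t => if t is s.+1 then d s else b).
case=> [_|s sL].
  split=> // -[//|t'] /andP[_ t'L]; have [+ _ _ _] := seqP t' t'L.
  by rewrite inE => /andP[_ /eqP].
have [xF zQ xz below] := seqP s sL; split=> //.
  by move: xF; rewrite inE => /andP[].
by case=> [//|t'] /andP[st' t'L]; apply: below; apply/andP.
Qed.

Lemma increasing_enum L k (A : {set 'I_L}) : k <= #|A| ->
  exists h : 'I_k -> 'I_L, (forall i, h i \in A) /\ {homo h : i j / i < j}.
Proof.
case: k => [_|k cardA]; first by exists (widen_ord (leq0n L)); split=> -[].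
have [a0 _] : exists a, a \in A by apply/card_gt0P; apply: leq_trans cardA.
have sizeA : size (enum A) = #|A| by rewrite cardE.
have ord_ltn_trans : transitive (fun a b : 'I_L => a < b).
  by move=> ? ? ?; apply: ltn_trans.
have sortA : sorted (fun a b : 'I_L => a < b) (enum A).
  have -> : enum A = filter (mem A) (enum 'I_L) by rewrite enumT.
  apply: sorted_filter => //.
  by have := iota_ltn_sorted 0 L; rewrite -val_enum_ord sorted_map.
exists (fun i => nth a0 (enum A) i); split.
  by move=> i; rewrite -mem_enum mem_nth // sizeA (leq_trans (ltn_ord i) cardA).
move=> i j; apply: (sorted_ltn_nth ord_ltn_trans a0 sortA);
  by rewrite inE sizeA (leq_trans (ltn_ord _) cardA).
Qed.

Definition staircase (b c : bool) (i j : nat) :=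
  if i < j then c else if j < i then b else ~~ b.

Lemma staircase_inj (T U : Type) k (a : T -> U -> bool) (X : 'I_k -> T)
    (Z : 'I_k -> U) b c :
  (forall i j, a (X i) (Z j) = staircase b c i j) -> injective X /\ injective Z.
Proof.
move=> aXZ; have neq (i j : 'I_k) : i < j -> X i <> X j /\ Z i <> Z j.
  move=> ij; have ji : (j < i) = false by rewrite ltnNge ltnW.
  move: (aXZ j i) (aXZ i i) (aXZ j j).
  rewrite /staircase !ltnn ij ji /= => hji hii hjj.
  by split=> E; [move: hji; rewrite -E hii | move: hji; rewrite E hjj]; case: (b).
by split=> i j E; apply/val_inj; case: (ltngtP i j) => // /neq[]; congruence.
Qed.

(* Ramsey twice: once on the colour of [(x s, z t)] for [s < t], once on the
   adjacency among the [z t]; the colour below the diagonal is fixed by the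
   pigeonhole on [d]. *)
Lemma staircase_extraction (T : finType) (r : rel T) k L (x z : 'I_L -> T)
    (d : 'I_L -> bool) :
  symmetric r -> (ramsey_bound (ramsey_bound k)).*2 <= L ->
  (forall t, r (x t) (z t) = ~~ d t) ->
  (forall t t' : 'I_L, t < t' -> r (x t') (z t) = d t) ->
  exists (h : 'I_k -> 'I_L) b c e, [/\ {homo h : i j / i < j},
    forall i j, r (x (h i)) (z (h j)) = staircase b c i j &
    forall i j, i != j -> r (z (h i)) (z (h j)) = e].
Proof.
move=> r_sym cardL diag below.
have [b cardD] : exists b,
    ramsey_bound (ramsey_bound k) <= #|[set t in [set: 'I_L] | d t == b]|.
  by apply: bool_pigeonhole; rewrite cardsT card_ord addnn (leq_trans cardL).
pose col (s t : 'I_L) := if s < t then r (x s) (z t) else r (x t) (z s).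
have col_sym : symmetric col.
  by move=> s t; rewrite /col; case: ltngtP => // /val_inj->.
have [c [A1 [sA1 cardA1 homA1]]] :=
  @ramsey _ col col_sym (fun=> ramsey_bound k) _ cardD.
have [e [A2 [sA2 cardA2 homA2]]] :=
  @ramsey _ (fun s t => r (z s) (z t)) (fun s t => r_sym _ _) (fun=> k) A1 cardA1.
have [h [hA2 h_homo]] := increasing_enum cardA2.
have hA1 i : h i \in A1 := subsetP sA2 _ (hA2 i).
have hD i : d (h i) = b by move: (subsetP sA1 _ (hA1 i)); rewrite !inE => /eqP.
have neq_h (i j : 'I_k) : i < j -> h i != h j.
  by move/h_homo => lt; apply: contraTneq lt => ->; rewrite ltnn.
exists h, b, c, e; split=> // i j.
  rewrite /staircase; case: ltngtP => [ij|ji|/val_inj <-].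
  - by have := homA1 _ _ (hA1 i) (hA1 j) (neq_h _ _ ij); rewrite /col h_homo.
  - by rewrite below ?hD ?h_homo.
  - by rewrite diag hD.
move=> ne; apply: homA2; rewrite ?hA2 //.
by case: (ltngtP i j) ne => [/neq_h|/neq_h|/val_inj->]; rewrite ?eqxx // eq_sym.
Qed.

Lemma mkG_sub (T : finType) (R : rel T) (G : sgraph) (phi : T -> vert G) :
  injective phi -> (forall x y, x != y -> @adj G (phi x) (phi y) = R x y || R y x) ->
  induced_sub (mkG R) G.
Proof.
move=> phi_inj adj_phi; exists phi; split=> // x y; rewrite /= /srel.
by have [->|ne] := eqVneq x y; rewrite ?adj_irr ?adj_phi.
Qed.

Lemma star_sub (G : sgraph) n (v : vert G) (f : 'I_n -> vert G) :
  injective f -> (forall i, @adj G v (f i)) -> (forall i j, ~~ @adj G (f i) (f j)) ->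
  induced_sub (star n) G.
Proof.
move=> f_inj vf ff; apply: (@mkG_sub _ _ G (fun o => if o is Some i then f i else v)).
  move=> [i|] [j|] //= E; first by rewrite (f_inj _ _ E).
    by have := vf i; rewrite E adj_irr.
  by have := vf j; rewrite E adj_irr.
move=> [i|] [j|] //= _; first by rewrite (negbTE (ff i j)).
  by rewrite adj_sym vf.
by rewrite vf.
Qed.

Lemma two_clique_sub (G : sgraph) n (f g : 'I_n -> vert G) (e : bool)
    (R : rel ('I_n + 'I_n)) :
  injective f -> injective g -> (forall i j, f i != g j) ->
  (forall i j, i != j -> @adj G (f i) (f j)) ->
  (forall i j, i != j -> @adj G (g i) (g j) = e) ->
  (forall i j, R (inl i) (inl j)) -> (forall i j, R (inr i) (inr j) = e) ->
  (forall i j, R (inr i) (inl j) = false) ->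
  (forall i j, @adj G (f i) (g j) = R (inl i) (inr j)) ->
  induced_sub (mkG R) G.
Proof.
move=> f_inj g_inj fg ff gg RX RY RYX fgR.
apply: (@mkG_sub _ _ G (fun u => match u with inl i => f i | inr j => g j end)).
  move=> [i|i] [j|j] /= E.
  - by rewrite (f_inj _ _ E).
  - by move: (fg i j); rewrite E eqxx.
  - by move: (fg j i); rewrite E eqxx.
  - by rewrite (g_inj _ _ E).
move=> [i|i] [j|j] /= ne.
- by rewrite !RX ff //; apply: contraNneq ne => ->.
- by rewrite fgR RYX orbF.
- by rewrite adj_sym fgR RYX.
- by rewrite !RY gg ?orbb //; apply: contraNneq ne => ->.
Qed.

Lemma staircaseE (b c : bool) (i j : nat) : staircase b c i j =
  if b then (if c then i != j else j < i) else (if c then i <= j else i == j).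
Proof. by rewrite /staircase; case: b; case: c; case: ltngtP. Qed.

Definition obstruction_free (n : nat) (G : sgraph) :=
  [/\ ~ induced_sub (star n) G, ~ induced_sub (MKI n) G, ~ induced_sub (MKK n) G,
      ~ induced_sub (AKK n) G & ~ induced_sub (HKK n) G].

Section Staircase.
Variables (G : sgraph) (n : nat) (X Z : 'I_n.+1 -> vert G) (b c e : bool).
Local Notation adj := (@adj G).
Hypothesis adjXZ : forall i j, adj (X i) (Z j) = staircase b c i j.
Hypothesis adjXX : forall i j, i != j -> adj (X i) (X j).
Hypothesis adjZZ : forall i j, i != j -> adj (Z i) (Z j) = e.
Hypothesis neqXZ : forall i j, X i != Z j.

Lemma staircase_two_clique_sub (sigma tau : 'I_n -> 'I_n.+1) (R : rel ('I_n + 'I_n)) :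
  injective sigma -> injective tau ->
  (forall i j, R (inl i) (inl j)) -> (forall i j, R (inr i) (inr j) = e) ->
  (forall i j, R (inr i) (inl j) = false) ->
  (forall i j, staircase b c (sigma i) (tau j) = R (inl i) (inr j)) ->
  induced_sub (mkG R) G.
Proof.
move=> s_inj t_inj RX RY RYX sR; have [X_inj Z_inj] := staircase_inj adjXZ.
apply: (two_clique_sub (f := X \o sigma) (g := Z \o tau) (e := e)) => //.
- exact: inj_comp.
- exact: inj_comp.
- by move=> i j; apply: neqXZ.
- by move=> i j ne; apply: adjXX; rewrite (inj_eq s_inj).
- by move=> i j ne; apply: adjZZ; rewrite (inj_eq t_inj).
- by move=> i j; rewrite /= adjXZ sR.
Qed.

Lemma staircase_star_sub (v : 'I_n.+1) (tau : 'I_n -> 'I_n.+1) :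
  injective tau -> e = false -> (forall i, staircase b c v (tau i)) ->
  induced_sub (star n) G.
Proof.
move=> t_inj e0 vt; have [_ Z_inj] := staircase_inj adjXZ.
apply: (star_sub (v := X v) (f := Z \o tau)).
- exact: inj_comp.
- by move=> i; rewrite /= adjXZ.
- move=> i j; have [->|ne] := eqVneq i j; first by rewrite adj_irr.
  by rewrite /= adjZZ ?e0 // (inj_eq t_inj).
Qed.

Lemma staircase_not_obstruction_free : ~ obstruction_free n G.
Proof.
have w_inj := widen_ord_inj (le_mn := leqnSn n).
have wrw_inj : injective (@rev_ord n.+1 \o widen_ord (leqnSn n)).
  exact: inj_comp rev_ord_inj _.
have rww_inj : injective (widen_ord (leqnSn n) \o @rev_ord n).
  exact: inj_comp _ rev_ord_inj.
case=> noS noMKI noMKK noAKK noHKK.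
have [e0|e1] : e = false \/ e = true by case: (e); [right|left].
  case Eb: b; last case Ec: c.
  - apply/noS/(staircase_star_sub (v := ord_max) w_inj) => // i.
    by rewrite staircaseE Eb /=; case: (c); have := ltn_ord i; lia.
  - apply/noS/(staircase_star_sub (v := ord0) w_inj) => // i.
    by rewrite staircaseE Eb Ec.
  - apply/noMKI/(staircase_two_clique_sub w_inj w_inj) => // i j.
    by rewrite staircaseE Eb Ec.
case Eb: b; case Ec: c.
- apply/noAKK/(staircase_two_clique_sub w_inj w_inj) => // i j.
  by rewrite staircaseE Eb Ec.
- apply/noHKK/(staircase_two_clique_sub wrw_inj rww_inj) => // i j.
  by rewrite staircaseE Eb Ec /=; have := ltn_ord i; have := ltn_ord j; lia.
- apply/noHKK/(staircase_two_clique_sub w_inj w_inj) => // i j.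
  by rewrite staircaseE Eb Ec.
- apply/noMKK/(staircase_two_clique_sub w_inj w_inj) => // i j.
  by rewrite staircaseE Eb Ec.
Qed.

End Staircase.

Definition clique_threshold n := 2 ^ (ramsey_bound (ramsey_bound n.+1)).*2.

Section ObstructionFree.
Variable G : sgraph.
Local Notation V := (vert G).
Local Notation adj := (@adj G).

Lemma clique_separated (Q : {set V}) :
  clique Q -> {in Q &, injective (@cnbhd G)} ->
  {in Q &, forall q q', q != q' -> exists2 z, z \notin Q & adj q z != adj q' z}.
Proof.
move=> cQ twQ q q' qQ q'Q ne.
have [z dz] : exists z, (z \in cnbhd q) != (z \in cnbhd q').
  apply/existsP; apply: contraNT ne => /existsPn same; apply/eqP/twQ => //.
  by apply/setP => z; apply/eqP/negPn/same.
have zQ : z \notin Q.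
  apply: contra dz => zQ.
  by rewrite (subsetP (clique_sub_cnbhd cQ qQ)) ?(subsetP (clique_sub_cnbhd cQ q'Q)).
have zq w : w \in Q -> (z == w) = false by move=> wQ; apply: contraNF zQ => /eqP->.
by exists z => //; move: dz; rewrite !inE !zq.
Qed.

Lemma clique_not_obstruction_free n (Q : {set V}) :
  clique Q -> {in Q &, injective (@cnbhd G)} -> clique_threshold n <= #|Q| ->
  ~ obstruction_free n G.
Proof.
move=> cQ twQ cardQ; pose L := (ramsey_bound (ramsey_bound n.+1)).*2.
have [x [z [d seqP]]] := separating_sequence (clique_separated cQ twQ) (subxx Q) cardQ.
have inQ t : t < L -> x t \in Q /\ z t \notin Q by case/seqP.
have [||h [b [c [e [_ adjXZ adjZZ]]]]] := @staircase_extraction _ adj n.+1 L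
    (fun t => x t) (fun t => z t) (fun t => d t) (@adj_sym G) (leqnn L).
- by move=> t; have [] := seqP t (ltn_ord t).
- by move=> t t' tt'; have [_ _ _ ->] := seqP t (ltn_ord t); rewrite // tt' ltn_ord.
have [X_inj _] := staircase_inj adjXZ.
apply: (staircase_not_obstruction_free adjXZ _ adjZZ) => i j.
  move=> ne; apply: (cliqueP _ cQ); try exact: (inQ _ (ltn_ord _)).1.
  by rewrite (inj_eq X_inj).
have [xQ _] := inQ _ (ltn_ord (h i)); have [_ zQ] := inQ _ (ltn_ord (h j)).
by apply: contraNneq zQ => <-.
Qed.

Lemma nbhd_not_obstruction_free n v (B : {set V}) :
  (forall w, w \in B -> adj v w) -> {in B &, injective (@cnbhd G)} ->
  2 ^ (clique_threshold n + n) <= #|B| -> ~ obstruction_free n G.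
Proof.
move=> vB twB cardB.
have [[|] [A [sAB cardA homA]]] :=
  @ramsey _ adj (@adj_sym G) (fun c => if c then clique_threshold n else n) B cardB.
  apply: (clique_not_obstruction_free (Q := A)) cardA.
    by apply/cliqueP => x y xA yA ne; rewrite homA.
  by move=> x y xA yA; apply: twB; apply: (subsetP sAB).
case=> noS _ _ _ _; apply: noS.
apply: (star_sub (v := v) (f := fun i => enum_val (widen_ord cardA i))).
- by move=> i j /enum_val_inj/widen_ord_inj.
- by move=> i; apply/vB/(subsetP sAB)/enum_valP.
- move=> i j; have [->|ne] := eqVneq i j; first by rewrite adj_irr.
  rewrite homA ?enum_valP // (inj_eq enum_val_inj).
  by rewrite (inj_eq (widen_ord_inj (le_mn := cardA))).
Qed.

(* Each neighbouring twin class of [tw v] has a representative adjacent to [v];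
   representatives of distinct classes are not twins. *)
Lemma twin_reduced_maxdeg_of_obstruction_free n :
  obstruction_free n G -> twin_reduced_maxdeg_le G (2 ^ (clique_threshold n + n)).
Proof.
move=> free _ /imsetP[v _ ->]; rewrite leqNgt; apply/negP => big.
pose NB := tq_nbhd (tw v); pose rep (B : {set V}) := odflt v [pick b in B | adj v b].
have repP B : B \in NB -> rep B \in B /\ adj v (rep B).
  rewrite inE => /andP[/imsetP[w _ ->]] /andP[ne /existsP[a /andP[aA]]].
  case/existsP => b /andP[bB ab].
  have vb : adj v b.
    have : b \in cnbhd v by rewrite -(tw_cnbhd aA) !inE ab orbT.
    rewrite !inE => /predU1P[bv|//].
    by move: ne; rewrite -(tw_eq bB) bv eqxx.
  by rewrite /rep; case: pickP => [b' /andP[]|/(_ b)] //; rewrite bB vb.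
have repK B : B \in NB -> tw (rep B) = B.
  move=> BN; have [rB _] := repP B BN.
  by move: BN rB; rewrite inE => /andP[/imsetP[w _ ->] _] /tw_eq.
apply: (@nbhd_not_obstruction_free n v (rep @: NB) _ _ _ free).
- by move=> _ /imsetP[B BN ->]; case: (repP B BN).
- move=> _ _ /imsetP[B1 B1N ->] /imsetP[B2 B2N ->] e; congr rep.
  by rewrite -(repK B1 B1N) -(repK B2 B2N) /tw e.
rewrite card_in_imset; first exact: ltnW.
by move=> B1 B2 B1N B2N e; rewrite -(repK B1 B1N) e repK.
Qed.

End ObstructionFree.

Section Classes.
Variable C : sgraph -> Prop.

Definition bounded (p : sgraph -> nat) := exists k, forall G, C G -> p G <= k.
Definition clique_sparse := exists k, forall G, C G -> omt G <= k /\ cideg G <= k.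
Definition twin_reduced_bounded :=
  exists d, forall G, C G -> twin_reduced_maxdeg_le G d.
Definition excludes_obstructions := exists n, forall G, C G -> obstruction_free n G.

Lemma clique_sparse_bounded : clique_sparse -> bounded omt /\ bounded thetastar.
Proof.
case=> k ksp; split; exists k => G /ksp[//].
by move=> _ cidk; apply: leq_trans (thetastar_le_cideg G) cidk.
Qed.

Lemma bounded_alphastar_of_thetastar : bounded thetastar -> bounded alphastar.
Proof.
by case=> k thk; exists k => G /thk; apply: leq_trans (alphastar_le_thetastar G).
Qed.

Lemma excludes_obstructions_of_bounded :
  hereditary C -> bounded omt -> bounded alphastar -> excludes_obstructions.
Proof.
move=> hC [k1 omtk] [k2 alphak]; exists (k1 + k2).+1 => G CG.
have small H : induced_sub H G -> omt H <= k1 /\ alphastar H <= k2.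
  by move=> HG; have CH := hC G H CG HG; split; [apply: omtk | apply: alphak].
split=> /small[omtH alphaH].
- by have := alphastar_star (k1 + k2).+1; lia.
- by have := omt_MKI (k1 + k2).+1; lia.
- by have := omt_MKK (k1 + k2).+1; lia.
- by have := omt_AKK (k1 + k2).+1; lia.
- by have := omt_HKK (k1 + k2).+1; lia.
Qed.

Lemma twin_reduced_bounded_of_excludes :
  excludes_obstructions -> twin_reduced_bounded.
Proof.
case=> n free; exists (2 ^ (clique_threshold n + n)) => G CG.
exact/twin_reduced_maxdeg_of_obstruction_free/free.
Qed.

Lemma bounded_cdeg_of_twin_reduced : twin_reduced_bounded -> bounded cdeg.
Proof. by case=> d degd; exists (2 ^ (d.+1 * d.+1)) => G /degd/cdeg_le_twin. Qed.

Lemma clique_sparse_of_cdeg : bounded cdeg -> clique_sparse.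
Proof.
case=> k cdegk; exists (2 ^ k + k.+1) => G /cdegk cdegG.
have : 2 ^ cdeg G <= 2 ^ k by rewrite leq_pexp2l.
by have := omt_le_cdeg G; have := cideg_le_cdeg G; lia.
Qed.

End Classes.

Theorem theorem1p5 (C : sgraph -> Prop) : hereditary C ->
  [<-> (exists k, forall G, C G -> omt G <= k /\ cideg G <= k);
       (exists d, forall G, C G -> twin_reduced_maxdeg_le G d);
       (exists k, forall G, C G -> omt G <= k) /\
         (exists k, forall G, C G -> alphastar G <= k);
       (exists k, forall G, C G -> omt G <= k) /\
         (exists k, forall G, C G -> thetastar G <= k);
       (exists k, forall G, C G -> cdeg G <= k);
       (exists n, forall G, C G ->
          [/\ ~ induced_sub (star n) G, ~ induced_sub (MKI n) G,
              ~ induced_sub (MKK n) G, ~ induced_sub (AKK n) G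
            & ~ induced_sub (HKK n) G])].
Proof.
move=> hC.
have theta_excludes : bounded C omt -> bounded C thetastar -> excludes_obstructions C.
  move=> omtC /bounded_alphastar_of_thetastar.
  exact: excludes_obstructions_of_bounded.
have sparse_excludes : clique_sparse C -> excludes_obstructions C.
  by case/clique_sparse_bounded.
have excludes_sparse : excludes_obstructions C -> clique_sparse C.
  move/twin_reduced_bounded_of_excludes/bounded_cdeg_of_twin_reduced.
  exact: clique_sparse_of_cdeg.
tfae.
- by move/sparse_excludes/twin_reduced_bounded_of_excludes.
- move/bounded_cdeg_of_twin_reduced/clique_sparse_of_cdeg/clique_sparse_bounded.
  by case=> omtC /bounded_alphastar_of_thetastar.
- case=> omtC alphaC; apply/clique_sparse_bounded/excludes_sparse.
  exact: excludes_obstructions_of_bounded.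
- case=> omtC thetaC; apply/bounded_cdeg_of_twin_reduced.
  exact/twin_reduced_bounded_of_excludes/theta_excludes.
- by move/clique_sparse_of_cdeg/sparse_excludes.
- exact: excludes_sparse.
Qed.
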